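(* Let $p\in[0,1]^N$ and let $\mathcal L:=\{i\in\{\tilde k+1,\dots,N\}:B^{\mathcal N}_{1:i}=i-1\}$. Then $$\mathcal L=\{\tilde k(p'):\ p'\in[0,1]^N,\ \|p-p'\|_0\le1,\ \tilde k(p')>\tilde k\}.$$
   Context: $q\in(0,1)$, $N\ge1$. For $x\in[0,1]^N$, $B^{\mathcal N}_{1:i}(x)=|\{j\in\{1,\dots,N\}:0\le x_j<iq/N\}|$ ($B^{\mathcal N}_{1:0}=0$) and $\tilde k(x)=\max\{i\in\{0,\dots,N\}:B^{\mathcal N}_{1:i}(x)=i\}$ is the Benjamini–Hochberg rejection count. Write $B^{\mathcal N}_{1:i}=B^{\mathcal N}_{1:i}(p)$ and $\tilde k=\tilde k(p)$. $\|p-p'\|_0$ is the number of indices at which $p$ and $p'$ differ. *)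

From mathcomp Require Import all_boot all_order all_algebra.
Set Implicit Arguments. Unset Strict Implicit. Unset Printing Implicit Defensive.
Import Order.TTheory GRing.Theory Num.Theory.
Local Open Scope ring_scope.

Definition BN {R : realFieldType} (q : R) (N : nat) (x : 'I_N -> R) (i : nat) : nat :=
  #|[set j : 'I_N | (0 <= x j) && (x j < i%:R * q / N%:R)]|.

(* Benjamini-Hochberg rejection count: max { i in {0..N} : B_{1:i}(x) = i } *)
Definition ktilde {R : realFieldType} (q : R) (N : nat) (x : 'I_N -> R) : nat :=
  \max_(i < N.+1 | BN q x i == i) (i : nat).

Definition l0dist {R : realFieldType} (N : nat) (x y : 'I_N -> R) : nat :=
  #|[set j : 'I_N | x j != y j]|.

Definition unit_cube {R : realFieldType} (N : nat) (x : 'I_N -> R) : Prop :=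
  forall j, 0 <= x j <= 1.

From mathcomp Require Import all_boot all_order all_algebra.
From mathcomp Require Import zify.
Set Implicit Arguments. Unset Strict Implicit. Unset Printing Implicit Defensive.
Import Order.TTheory GRing.Theory Num.Theory.
Local Open Scope ring_scope.

(* Write [B l] for [BN q x l]: it is nondecreasing, [B 0 = 0] and [B N <= N],
   so [B l >= l] forces a fixed point at or above [l]; hence [B l < l] for every
   [l] strictly between [ktilde x] and [N].  Changing one coordinate moves every
   [B l] by at most one, so a neighbour [p'] with a larger rejection count
   [k := ktilde p'] gives [k - 1 <= BN q p k < k].  Conversely, if [B i = i - 1]
   above [ktilde p], setting to 0 the smallest coordinate [p j >= t i] (with
   [t i = i q / N] the BH threshold) gives a vector whose count is [i] at [i]
   and, since no coordinate lies in [[t i, p j)], stays below [l] for [l > i]. *)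

Section BHCount.
Variables (R : realFieldType) (q : R) (N : nat).
Hypotheses (q_gt0 : 0 < q) (N_gt0 : (0 < N)%N).

Definition bh_threshold (l : nat) : R := l%:R * q / N%:R.
Local Notation t := bh_threshold.

Lemma BNE (x : 'I_N -> R) l : BN q x l = #|[set j | 0 <= x j < t l]|.
Proof. by []. Qed.

Lemma ler_bh_threshold l m : (l <= m)%N -> t l <= t m.
Proof. by move=> lm; rewrite ler_pM2r ?invr_gt0 ?ltr0n // ler_pM2r // ler_nat. Qed.

Lemma bh_threshold_gt0 l : (0 < l)%N -> 0 < t l.
Proof. by move=> l_gt0; rewrite divr_gt0 ?mulr_gt0 ?ltr0n. Qed.

Lemma BN0 (x : 'I_N -> R) : BN q x 0 = 0%N.
Proof.
rewrite BNE /bh_threshold mul0r mul0r; apply/eqP; rewrite cards_eq0.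
by apply/eqP/setP => j; rewrite !inE; case: leP => //= h; rewrite ltNge h.
Qed.

Lemma BN_le (x : 'I_N -> R) l m : (l <= m)%N -> (BN q x l <= BN q x m)%N.
Proof.
move=> lm; apply/subset_leq_card/subsetP => j; rewrite !inE => /andP[-> /= lt_l].
exact: lt_le_trans lt_l (ler_bh_threshold lm).
Qed.

Lemma BN_leN (x : 'I_N -> R) l : (BN q x l <= N)%N.
Proof. by rewrite -[N in (_ <= N)%N]card_ord max_card. Qed.

Lemma BN_fixpoint_ge (x : 'I_N -> R) l :
  (l <= N)%N -> (l <= BN q x l)%N -> exists2 m, (l <= m <= N)%N & BN q x m = m.
Proof.
move Ed : (N - l)%N => d; elim: d l Ed => [|d IHd] l Ed lN l_le.
  by have BlN := BN_leN x l; exists l; [rewrite leqnn lN | lia].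
have [fix_l|/eqP nfix_l] := eqVneq (BN q x l) l; first by exists l; rewrite ?leqnn ?lN.
have lt_lN : (l < N)%N by have := BN_leN x l; lia.
have [|||m /andP[lm mN] fix_m] := IHd l.+1; [lia | done | |].
  by have := BN_le x (leqnSn l); lia.
by exists m => //; rewrite (ltnW lm) mN.
Qed.

Lemma ktilde_leN (x : 'I_N -> R) : (ktilde q x <= N)%N.
Proof. by apply/bigmax_leqP => i _; rewrite -ltnS. Qed.

Lemma ktilde_ge (x : 'I_N -> R) l : (l <= N)%N -> BN q x l = l -> (l <= ktilde q x)%N.
Proof.
move=> lN fix_l; rewrite -ltnS in lN.
by apply: (@leq_bigmax_cond _ _ (fun i : 'I_N.+1 => i : nat) (Ordinal lN)); rewrite /= fix_l.
Qed.

Lemma BN_ktilde (x : 'I_N -> R) : BN q x (ktilde q x) = ktilde q x.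
Proof.
apply/eqP; apply: (big_ind (fun m => BN q x m == m)) => //; first by rewrite BN0.
by move=> a b fix_a fix_b; rewrite /maxn; case: ifP.
Qed.

Lemma BN_lt_gt_ktilde (x : 'I_N -> R) l :
  (ktilde q x < l)%N -> (l <= N)%N -> (BN q x l < l)%N.
Proof.
move=> kl lN; rewrite ltnNge; apply/negP => /(BN_fixpoint_ge lN)[m /andP[lm mN]].
by move/(ktilde_ge mN); lia.
Qed.

Lemma ktilde_eq (x : 'I_N -> R) i :
  (i <= N)%N -> BN q x i = i ->
  (forall l, (i < l)%N -> (l <= N)%N -> (BN q x l < l)%N) -> ktilde q x = i.
Proof.
move=> iN fix_i below; apply/eqP; rewrite eqn_leq ktilde_ge // andbT.
apply/bigmax_leqP => l /eqP fix_l; rewrite leqNgt; apply/negP => il.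
by have := below l il (ltn_ord l); rewrite fix_l ltnn.
Qed.

Lemma l0distC (x y : 'I_N -> R) : l0dist x y = l0dist y x.
Proof. by apply: eq_card => j; rewrite !inE eq_sym. Qed.

Lemma BN_l0dist_le (x y : 'I_N -> R) l :
  (l0dist x y <= 1)%N -> (BN q x l <= (BN q y l).+1)%N.
Proof.
move=> dxy; rewrite !BNE -addn1.
apply: leq_trans _ (leq_add (leqnn _) dxy); apply: leq_trans _ (leq_card_setU _ _).
apply/subset_leq_card/subsetP => j; rewrite !inE.
by case: eqP => [->|_]; rewrite ?orbT ?orbF.
Qed.

Lemma BN_neighbour_ktilde_gt (p p' : 'I_N -> R) :
  (l0dist p p' <= 1)%N -> (ktilde q p < ktilde q p')%N ->
  BN q p (ktilde q p') = (ktilde q p').-1.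
Proof.
move=> dpp' kk'; rewrite l0distC in dpp'.
have := BN_l0dist_le (ktilde q p') dpp'; rewrite BN_ktilde.
have := BN_lt_gt_ktilde kk' (ktilde_leN p'); lia.
Qed.

Definition zero_at (x : 'I_N -> R) (j : 'I_N) : 'I_N -> R :=
  fun k => if k == j then 0 else x k.

Lemma l0dist_zero_at (x : 'I_N -> R) j : (l0dist x (zero_at x j) <= 1)%N.
Proof.
rewrite -(cards1 j); apply/subset_leq_card/subsetP => k.
by rewrite !inE /zero_at; case: ifP => // _; rewrite eqxx.
Qed.

Lemma unit_cube_zero_at (x : 'I_N -> R) j : unit_cube x -> unit_cube (zero_at x j).
Proof. by move=> x01 k; rewrite /zero_at; case: eqP => // _; rewrite lexx ler01. Qed.

Lemma BN_zero_at (x : 'I_N -> R) j l : 0 <= x j -> (0 < l)%N ->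
  BN q (zero_at x j) l = (BN q x l + (t l <= x j)%R)%N.
Proof.
move=> xj_ge0 l_gt0; rewrite !BNE.
have -> : [set k | 0 <= zero_at x j k < t l] = j |: [set k | 0 <= x k < t l].
  apply/setP => k; rewrite !inE /zero_at.
  by case: eqP => [->|//]; rewrite lexx bh_threshold_gt0.
by rewrite cardsU1 addnC inE xj_ge0 /= -leNgt.
Qed.

Lemma exists_ge_bh_threshold (x : 'I_N -> R) l :
  (forall k, 0 <= x k) -> (BN q x l < N)%N -> exists j, t l <= x j.
Proof.
move=> x_ge0 BlN; have [j|none] := pickP (fun j => t l <= x j); first by exists j.
suff : (N <= BN q x l)%N by lia.
rewrite BNE -[X in (X <= _)%N]card_ord; apply/subset_leq_card/subsetP => j _.
by rewrite inE x_ge0 ltNge none.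
Qed.

Lemma BN_le_gap (x : 'I_N -> R) i l :
  (forall k, x k < t l -> x k < t i) -> (BN q x l <= BN q x i)%N.
Proof.
move=> gap; apply/subset_leq_card/subsetP => k.
by rewrite !inE => /andP[-> /gap].
Qed.

Lemma exists_ktilde_zero_at (p : 'I_N -> R) i :
  (forall k, 0 <= p k) -> (ktilde q p < i)%N -> (i <= N)%N -> BN q p i = i.-1 ->
  exists j, ktilde q (zero_at p j) = i.
Proof.
move=> p_ge0 ki iN Bi; have i_gt0 : (0 < i)%N by lia.
have [j0 j0_ge] : exists j, t i <= p j by apply: exists_ge_bh_threshold => //; lia.
case: (@arg_minP _ _ _ j0 (fun j => t i <= p j) p j0_ge) => j /= pj_ge pj_min; exists j.
apply: ktilde_eq => // [|l il lN].
  by rewrite BN_zero_at // Bi pj_ge; lia.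
rewrite BN_zero_at //; last by lia.
have [pj_ge_l|pj_lt_l] := leP (t l) (p j); last first.
  by have := BN_lt_gt_ktilde (ltn_trans ki il) lN; lia.
suff : (BN q p l <= BN q p i)%N by lia.
apply: BN_le_gap => k pk_lt; rewrite ltNge; apply/negP => /pj_min pjk.
by move: pk_lt; rewrite ltNge (le_trans pj_ge_l pjk).
Qed.

End BHCount.

Theorem proposition1 (R : realFieldType) (q : R) (N : nat)
    (hq0 : 0 < q) (hq1 : q < 1) (hN : (1 <= N)%N)
    (p : 'I_N -> R) (hp : unit_cube p) (i : nat) :
  [/\ (ktilde q p < i)%N, (i <= N)%N & BN q p i = i.-1]
  <->
  (exists p' : 'I_N -> R,
      [/\ unit_cube p', (l0dist p p' <= 1)%N,
          (ktilde q p < ktilde q p')%N & ktilde q p' = i]).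
Proof.
have p_ge0 k : 0 <= p k by case/andP: (hp k).
split=> [[ki iN Bi] | [p' [_ dpp' kk' <-]]].
  have [j kj] := exists_ktilde_zero_at hq0 hN p_ge0 ki iN Bi.
  exists (zero_at p j); split; rewrite ?kj //.
  - exact: unit_cube_zero_at.
  - exact: l0dist_zero_at.
split=> //; first exact: ktilde_leN.
exact: BN_neighbour_ktilde_gt hq0 hN _ _ dpp' kk'.
Qed.
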